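(* The Grötzsch graph $M(C_5)$ has odd girth $5$ and admits an orientation in which every $5$-cycle (i.e., every shortest odd cycle) is alternating.
   Context: For a graph $G$, the Mycielskian $M(G)$ has vertex set $\{(v,0),(v,1):v\in V(G)\}\cup\{z\}$, with $(u,i)$ adjacent to $(v,j)$ iff $\{u,v\}\in E(G)$ and ($|i-j|=1$ or $i=j=0$), and $z$ adjacent to every $(v,1)$. The Grötzsch graph is $M(C_5)$. The odd girth is the length of a shortest odd cycle. An orientation assigns each edge exactly one direction. In an oriented graph, a subgraph that is a cycle is called alternating if at most one of its vertices has both positive in-degree and positive out-degree within that cycle. *)

From mathcomp Require Import all_boot.
Set Implicit Arguments. Unset Strict Implicit. Unset Printing Implicit Defensive.

(* A simple graph is a symmetric irreflexive relation on a finite type. *)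

Definition C5 : rel 'I_5 :=
  fun i j => (j == i.+1 %% 5 :> nat) || (i == j.+1 %% 5 :> nat).

(* Mycielskian: vertex (v,i) is Some (v, b) with b = false for i = 0 and
   b = true for i = 1; the extra vertex z is None. *)
Definition myc_vertex (T : finType) := option (T * bool).

Definition mycielskian (T : finType) (e : rel T) : rel (myc_vertex T) :=
  fun x y =>
    match x, y with
    | Some (u, i), Some (v, j) => e u v && ((i != j) || (~~ i && ~~ j))
    | None, Some (_, j) => j
    | Some (_, i), None => i
    | None, None => false
    end.

Definition grotzsch : rel (myc_vertex 'I_5) := mycielskian C5.

Definition is_graph_cycle (V : finType) (e : rel V) (s : seq V) : Prop :=
  [/\ uniq s, 3 <= size s & cycle e s].

Definition odd_girth (V : finType) (e : rel V) (k : nat) : Prop :=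
  (exists s, is_graph_cycle e s /\ odd (size s) /\ size s = k) /\
  (forall s, is_graph_cycle e s -> odd (size s) -> k <= size s).

(* An orientation: o x y means the edge {x,y} is directed x -> y; each edge
   gets exactly one direction and only edges get directions. *)
Definition is_orientation (V : finType) (e : rel V) (o : rel V) : Prop :=
  (forall x y, o x y -> e x y) /\
  (forall x y, e x y -> o x y != o y x).

(* Vertex v of cycle s has positive in- and out-degree within the cycle,
   whose edges at v are {prev s v, v} and {v, next s v}. *)
Definition cycle_inout (V : finType) (o : rel V) (s : seq V) (v : V) : bool :=
  (o (prev s v) v || o (next s v) v) && (o v (prev s v) || o v (next s v)).

Definition alternating (V : finType) (o : rel V) (s : seq V) : Prop :=
  count (cycle_inout o s) s <= 1.

From mathcomp Require Import all_boot zmodp.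

(* Orient every edge of the Groetzsch graph upwards with respect to a height
   function that is proper on edges. A vertex of a cycle then has positive in-
   and out-degree in the cycle exactly when it is not a local extremum of the
   height along the cycle. With the heights [grotzsch_height] (found by
   computer search) every 5-cycle has two local maxima and two local minima,
   hence a single transit vertex. This, and the absence of triangles, is
   decided by enumerating closed walks along adjacency lists. *)

Set Implicit Arguments.
Unset Strict Implicit.
Unset Printing Implicit Defensive.

Section ClosedWalks.

Variables (T : eqType) (e : rel T) (vs : seq T).
Hypothesis vs_full : forall x, x \in vs.

Fixpoint paths_from (x : T) (n : nat) : seq (seq T) :=
  if n is n'.+1 then
    [seq y :: p | y <- [seq y <- vs | e x y], p <- paths_from y n']
  else [:: [::]].

Lemma mem_paths_from x p : path e x p -> p \in paths_from x (size p).
Proof.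
elim: p x => [|y p IHp] x //= /andP[exy pyp].
by apply/allpairsPdep; exists y, p; rewrite mem_filter exy vs_full IHp.
Qed.

Definition closed_walks (n : nat) : seq (seq T) :=
  [seq x :: p | x <- vs, p <- [seq p <- paths_from x n | e (last x p) x]].

Lemma mem_closed_walks x p : cycle e (x :: p) -> x :: p \in closed_walks (size p).
Proof.
rewrite /= rcons_path => /andP[xp ex].
by apply/allpairsPdep; exists x, p; rewrite mem_filter ex vs_full mem_paths_from.
Qed.

Lemma closed_walksP n (P : pred (seq T)) :
  all P (closed_walks n) -> forall s, cycle e s -> size s = n.+1 -> P s.
Proof.
move=> /allP all_P [|x p] // cyc_s [size_p].
by apply: all_P; rewrite -size_p mem_closed_walks.
Qed.

End ClosedWalks.

Section HeightOrientation.

Variables (T : finType) (e : rel T) (h : T -> nat).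

Definition height_orientation : rel T := fun x y => e x y && (h x < h y).

Lemma height_orientationP :
  symmetric e -> (forall x y, e x y -> h x != h y) ->
  is_orientation e height_orientation.
Proof.
move=> e_sym h_proper; split=> [x y /andP[] //|x y exy].
rewrite /height_orientation exy -e_sym exy /=.
by case: ltngtP (h_proper x y exy).
Qed.

End HeightOrientation.

Lemma mycielskian_sym (T : finType) (e : rel T) :
  symmetric e -> symmetric (mycielskian e).
Proof.
move=> e_sym [[u i]|] [[v j]|] //=.
by rewrite e_sym eq_sym; case: i; case: j.
Qed.

Lemma C5_sym : symmetric C5.
Proof. by move=> i j; rewrite /C5 orbC. Qed.

(* [inZp] rather than [insub]/[enum], so that the list reduces under
   [vm_compute]. *)
Definition grotzsch_vertices : seq (myc_vertex 'I_5) :=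
  None :: [seq Some (inZp u, b) | u <- iota 0 5, b <- [:: false; true]].

Lemma grotzsch_vertices_full x : x \in grotzsch_vertices.
Proof.
case: x => [[u b]|]; last exact: mem_head.
apply/mem_behead/allpairsP; exists (val u, b).
by rewrite mem_iota ltn_ord valZpK; case: b.
Qed.

Definition grotzsch_height (x : myc_vertex 'I_5) : nat :=
  match x with
  | None => 0
  | Some (_, true) => 2
  | Some (u, false) => nth 0 [:: 0; 1; 3; 1; 3] u
  end.

Definition grotzsch_orientation := height_orientation grotzsch grotzsch_height.

Lemma grotzsch_height_proper x y :
  grotzsch x y -> grotzsch_height x != grotzsch_height y.
Proof.
have proper : all (fun x => all (fun y =>
    grotzsch x y ==> (grotzsch_height x != grotzsch_height y))
  grotzsch_vertices) grotzsch_vertices by vm_compute.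
move: proper => /allP/(_ x (grotzsch_vertices_full x)).
by move=> /allP/(_ y (grotzsch_vertices_full y))/implyP.
Qed.

Lemma grotzsch_orientationP : is_orientation grotzsch grotzsch_orientation.
Proof.
apply: height_orientationP grotzsch_height_proper.
exact/mycielskian_sym/C5_sym.
Qed.

Lemma grotzsch_triangle_free s : cycle grotzsch s -> size s != 3.
Proof.
move=> cyc_s; apply/eqP => size_s.
have no_triangle : all pred0 (closed_walks grotzsch grotzsch_vertices 2).
  by vm_compute.
by have := closed_walksP grotzsch_vertices_full no_triangle cyc_s size_s.
Qed.

Lemma grotzsch_odd_girth : odd_girth grotzsch 5.
Proof.
split; first by exists [seq Some (inZp u, false) | u <- iota 0 5]; split.
move=> s [_ s_ge3 /grotzsch_triangle_free s_ne3].
by case: (size s) s_ge3 s_ne3 => [|[|[|[|[|n]]]]].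
Qed.

Lemma grotzsch_pentagon_alternating s :
  is_graph_cycle grotzsch s -> size s = 5 -> alternating grotzsch_orientation s.
Proof.
move=> [uniq_s _ cyc_s] size_s.
have pentagons : all (fun s =>
    uniq s ==> (count (cycle_inout grotzsch_orientation s) s <= 1))
  (closed_walks grotzsch grotzsch_vertices 4) by vm_compute.
exact: implyP (closed_walksP grotzsch_vertices_full pentagons cyc_s size_s) uniq_s.
Qed.

Theorem mainTheorem13 :
  odd_girth grotzsch 5 /\
  exists o : rel (myc_vertex 'I_5),
    is_orientation grotzsch o /\
    forall s : seq (myc_vertex 'I_5),
      is_graph_cycle grotzsch s -> size s = 5 -> alternating o s.
Proof.
split; first exact: grotzsch_odd_girth.
exists grotzsch_orientation; split; first exact: grotzsch_orientationP.
exact: grotzsch_pentagon_alternating.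
Qed.
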